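(* Let $K$ be a number field, let $\mathcal{P}$ be the set of nonzero prime ideals of $K$, and let $\mathrm{N}=\mathrm{N}_{K/\mathbb{Q}}$ denote the absolute norm. Let $\mathcal{A}\subseteq\mathcal{P}$ be a subset such that there exist constants $\delta\geq 0$ and $C\in\mathbb{R}$ (depending at most on $\mathcal{A}$) with \[ \sum_{\substack{\mathfrak{p}\in\mathcal{A}\\ \mathrm{N}\mathfrak{p}\leq x}}\frac{1}{\mathrm{N}\mathfrak{p}}=\delta\log\log x+C+o\Big(\frac{1}{\log x}\Big)\qquad (x\to\infty). \] Let $b\geq 2$ be an integer, let $m\geq 1$, and let $S$ be a string of $m$ base-$b$ digits $a_1a_2\cdots a_m$ with $a_1\neq 0$; we also write $S$ for the positive integer $\sum_{i=1}^m a_i b^{m-i}$ whose base-$b$ expansion is this string. Let $\mathcal{A}_{b,S}$ be the set of $\mathfrak{p}\in\mathcal{A}$ such that the base-$b$ expansion of $\mathrm{N}\mathfrak{p}$ begins with the string $S$. Then the logarithmic density of $\mathcal{A}_{b,S}$ exists and \[ d(\mathcal{A}_{b,S})=\delta\log_b\big(1+S^{-1}\big). \]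
   Context: For a set $\mathcal{B}$ of prime ideals of $K$, define \[ \overline{d(\mathcal{B})}=\limsup_{x\to\infty}\frac{1}{\log\log x}\sum_{\substack{\mathfrak{p}\in\mathcal{B}\\ \mathrm{N}\mathfrak{p}\leq x}}\frac{1}{\mathrm{N}\mathfrak{p}},\qquad \underline{d(\mathcal{B})}=\liminf_{x\to\infty}\frac{1}{\log\log x}\sum_{\substack{\mathfrak{p}\in\mathcal{B}\\ \mathrm{N}\mathfrak{p}\leq x}}\frac{1}{\mathrm{N}\mathfrak{p}}. \] If these are equal, their common value is the logarithmic density $d(\mathcal{B})$ of $\mathcal{B}$. *)

From HB Require Import structures.
From mathcomp Require Import all_boot all_order all_algebra all_field.
From mathcomp Require Import all_classical all_reals all_analysis.
Set Implicit Arguments.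
Unset Strict Implicit.
Unset Printing Implicit Defensive.
Import Order.TTheory GRing.Theory Num.Theory.
Import numFieldNormedType.Exports.
Local Open Scope classical_set_scope.
Local Open Scope ring_scope.

(** A number field is a finite-dimensional field extension [K : fieldExtType rat]. *)

Definition integral (K : fieldExtType rat) (x : K) : Prop :=
  exists p : {poly int}, p \is monic /\ root (map_poly (fun z : int => (z%:~R : K)) p) x.

Definition OK (K : fieldExtType rat) : set K := [set x | integral x].
Arguments OK K : clear implicits.

Definition is_ideal (K : fieldExtType rat) (I : set K) : Prop :=
  [/\ I `<=` OK K, I 0,
      (forall x y, I x -> I y -> I (x + y)) &
      (forall a x, OK K a -> I x -> I (a * x))].

Definition is_nonzero_prime (K : fieldExtType rat) (I : set K) : Prop :=
  [/\ is_ideal I, I <> [set 0], I <> OK K &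
      (forall x y, OK K x -> OK K y -> I (x * y) -> I x \/ I y)].

Definition primes_of (K : fieldExtType rat) : set (set K) :=
  [set I | is_nonzero_prime I].
Arguments primes_of K : clear implicits.

(** [n] is the cardinality of O_K / I: there is a complete system of
    n pairwise incongruent representatives. *)
Definition quotient_card_is (K : fieldExtType rat) (I : set K) (n : nat) : Prop :=
  exists r : 'I_n -> K,
    [/\ (forall i, OK K (r i)),
        (forall i j, I (r i - r j) -> i = j) &
        (forall x, OK K x -> exists i, I (x - r i))].

(** Absolute norm N I = #(O_K / I) (0 by convention if no finite such n exists,
    which never happens for nonzero ideals). *)
Definition absnorm (K : fieldExtType rat) (I : set K) : nat :=
  xget 0%N [set n | quotient_card_is I n].

Definition recip_norm_sum (R : realType) (K : fieldExtType rat)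
    (B : set (set K)) (x : R) : \bar R :=
  \esum_(p in [set p | B p /\ ((absnorm p)%:R <= x)]) ((absnorm p)%:R^-1)%:E.

Definition upper_logdens (R : realType) (K : fieldExtType rat) (B : set (set K)) : \bar R :=
  limf_esup (fun x : R => (recip_norm_sum B x * ((ln (ln x))^-1)%:E)%E) (+oo : set_system R).
Definition lower_logdens (R : realType) (K : fieldExtType rat) (B : set (set K)) : \bar R :=
  limf_einf (fun x : R => (recip_norm_sum B x * ((ln (ln x))^-1)%:E)%E) (+oo : set_system R).

Arguments upper_logdens R {K} B.
Arguments lower_logdens R {K} B.

Definition has_logdensity (R : realType) (K : fieldExtType rat) (B : set (set K)) (d : R) : Prop :=
  upper_logdens R B = d%:E /\ lower_logdens R B = d%:E.

(** Base-b digits, most significant first (for b >= 2; digits b 0 = [::]). *)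
Fixpoint rdigits_aux (b fuel n : nat) : seq nat :=
  if fuel is f.+1 then
    (if n == 0%N then [::] else (n %% b)%N :: rdigits_aux b f (n %/ b))
  else [::].
Definition digits (b n : nat) : seq nat := rev (rdigits_aux b n n).

Definition digits_value (b : nat) (s : seq nat) : nat :=
  (\sum_(i < size s) nth 0%N s i * b ^ (size s - i.+1))%N.

Definition leading_digits_set (K : fieldExtType rat) (A : set (set K)) (b : nat) (s : seq nat)
  : set (set K) := [set p | A p /\ prefix s (digits b (absnorm p))].

From HB Require Import structures.
From mathcomp Require Import all_boot all_order all_algebra all_field.
From mathcomp Require Import all_classical all_reals all_analysis.
From mathcomp Require Import ring lra zify.
Set Implicit Arguments.
Unset Strict Implicit.
Unset Printing Implicit Defensive.
Import Order.TTheory GRing.Theory Num.Theory.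
Import numFieldNormedType.Exports.
Local Open Scope classical_set_scope.

(* Let F(x) be the sum of 1/Np over p in A with Np <= x, and S the integer
   written by the string. The norms with leading digits S are those in the
   blocks [S b^k, (S+1) b^k), and the mass c_k of the k-th block is
   F((S+1) b^k) - F(S b^k) = delta log (log ((S+1) b^k) / log (S b^k)) + o(1/k)
   = delta log_b (1 + 1/S) / k + o(1/k). By Stolz-Cesaro the sum of the c_k
   for k < K is delta log_b (1 + 1/S) log K + o(log K), and log log x is
   log K + O(1) for x in [S b^K, S b^(K+1)). *)

Lemma digits_value_rcons b s a :
  digits_value b (rcons s a) = digits_value b s * b + a.
Proof.
rewrite /digits_value size_rcons big_ord_recr /= nth_rcons ltnn eqxx subnn.
rewrite muln1 big_distrl /=; congr (_ + _); apply: eq_bigr => i _.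
rewrite nth_rcons ltn_ord -mulnA -expnSr; congr (_ * b ^ _).
by have := ltn_ord i; lia.
Qed.

Section digits.
Variable b : nat.
Hypothesis b_gt1 : 1 < b.

Lemma rdigits_aux_fuel f1 f2 n : n <= f1 -> n <= f2 ->
  rdigits_aux b f1 n = rdigits_aux b f2 n.
Proof.
elim: f1 f2 n => [|f1 IH] [|f2] n //=; rewrite ?leqn0.
- by move=> /eqP-> _.
- by move=> _ /eqP->.
case: (posnP n) => [->//|n0] n_f1 n_f2; congr (_ :: _).
by apply: IH; have := ltn_Pdiv b_gt1 n0; lia.
Qed.

Lemma digitsS n : 0 < n -> digits b n = rcons (digits b (n %/ b)) (n %% b).
Proof.
case: n => [//|n] _; rewrite /digits /= rev_cons; congr (rcons (rev _) _).
by apply: rdigits_aux_fuel; have := ltn_Pdiv b_gt1 (ltn0Sn n); lia.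
Qed.

Lemma digits_valueK : cancel (digits b) (digits_value b).
Proof.
elim/ltn_ind => n IH; case: (posnP n) => [->|n0].
  by rewrite /digits_value big_ord0.
by rewrite digitsS // digits_value_rcons IH ?ltn_Pdiv // -divn_eq.
Qed.

Variable s : seq nat.
Hypotheses (s_nil : s != [::]) (s_digits : all (fun a => a < b) s)
  (s_head : nth 0 s 0 != 0).

Lemma digits_digits_value : digits b (digits_value b s) = s.
Proof.
move: s_nil s_digits s_head; elim/last_ind: s => [//|t a IH] _.
rewrite all_rcons => /andP[a_lt_b t_digits].
have [->|t_nil] := eqVneq t [::].
  move=> /= a0; rewrite (digits_value_rcons b [::]) /digits_value big_ord0.
  by rewrite digitsS ?lt0n // divn_small // modn_small.
rewrite nth_rcons; case: t t_nil IH t_digits => [//|a0 t] _ IH t_digits /= a0_neq0.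
have {}IH := IH isT t_digits a0_neq0.
have t_pos : 0 < digits_value b (a0 :: t).
  by rewrite lt0n; apply: contraPneq IH => ->.
rewrite -rcons_cons digits_value_rcons digitsS; last by have := ltnW b_gt1; nia.
by rewrite divnMDl ?(ltnW b_gt1) // divn_small // addn0 IH modnMDl modn_small.
Qed.

Lemma digits_value_gt0 : 0 < digits_value b s.
Proof.
by rewrite lt0n; apply: contra_neq s_nil => v0; rewrite -digits_digits_value v0.
Qed.

Local Notation S := (digits_value b s).

Lemma prefix_digitsP n :
  reflect (exists k, S * b ^ k <= n < S.+1 * b ^ k) (prefix s (digits b n)).
Proof.
apply: (iffP idP).
  move/prefixP => [u]; elim/last_ind: u n => [|u a IH] n.
    by rewrite cats0 => <-; exists 0; rewrite digits_valueK // !muln1 leqnn /=.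
  rewrite -rcons_cat; case: (posnP n) => [-> /(congr1 size)|n0].
    by rewrite size_rcons.
  rewrite digitsS // => /rcons_inj [/IH[k /andP[lo hi]] _]; exists k.+1.
  have := divn_eq n b; have := ltn_pmod n (ltnW b_gt1).
  by rewrite expnSr; nia.
case=> k; elim: k n => [|k IH] n.
  rewrite !muln1 => /andP[lo hi]; have -> : n = S by lia.
  by rewrite digits_digits_value prefix_refl.
rewrite expnSr => /andP[lo hi].
have n0 : 0 < n by have := digits_value_gt0; have := expn_gt0 b k; nia.
rewrite digitsS //; apply: prefix_trans (prefix_rcons _ _); apply: IH.
by rewrite leq_divRL ?ltn_divLR ?(ltnW b_gt1) // -!mulnA lo.
Qed.

Lemma prefix_digits_window n k : S * b ^ k <= n < S * b ^ k.+1 ->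
  prefix s (digits b n) = (n < S.+1 * b ^ k).
Proof.
move=> /andP[lo hi]; apply/prefix_digitsP/idP => [[j /andP[lo' hi']]|hi'].
  have S0 := digits_value_gt0.
  case: (ltngtP j k) => [jk|kj|<-//].
    by have := leq_pexp2l (ltnW b_gt1) jk; rewrite expnSr; nia.
  by have := leq_pexp2l (ltnW b_gt1) kj; nia.
by exists k; rewrite lo.
Qed.

End digits.

Local Open Scope ring_scope.

Section log_asymptotics.
Context {R : realType}.

Lemma lnB_bounds (p q : R) : 0 < p -> 0 < q ->
  (q - p) / q <= ln q - ln p <= (q - p) / p.
Proof.
move=> p0 q0; have ln_le (y : R) : 0 < y -> ln y <= y - 1.
  by move=> y0; have := @le_ln1Dx R (y - 1); rewrite addrCA subrr addr0; apply; lra.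
have := ln_le _ (divr_gt0 p0 q0); have := ln_le _ (divr_gt0 q0 p0).
have -> : (q - p) / q = - (p / q - 1) by field; rewrite gt_eqF.
have -> : (q - p) / p = q / p - 1 by field; rewrite gt_eqF.
rewrite !ln_div ?posrE //; lra.
Qed.

Lemma invn_cvg0 : (fun n : nat => n%:R^-1 : R) @ \oo --> 0.
Proof. by rewrite -cvg_shiftS; exact: cvg_harmonic. Qed.

Lemma ln_cvgy : @ln R x @[x --> +oo] --> +oo.
Proof.
by apply/cvgryPge => M; near=> x; rewrite -[M]expRK ler_ln ?posrE ?expR_gt0.
Unshelve. all: by end_near.
Qed.

Lemma lnn_cvgy : (fun n : nat => ln n%:R : R) @ \oo --> +oo.
Proof. exact: cvg_comp cvgr_idn ln_cvgy. Qed.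

End log_asymptotics.

Section stolz_cesaro.
Context {R : realType}.

Lemma stolz_cesaro (u v : R ^nat) (l : R) :
  v @ \oo --> +oo -> (\forall n \near \oo, v n < v n.+1) ->
  (fun n => (u n.+1 - u n) / (v n.+1 - v n)) @ \oo --> l ->
  (fun n => u n / v n) @ \oo --> l.
Proof.
move=> vy v_incr ratio_l; apply/cvgrPdist_le => e e0.
have e2_gt0 : 0 < e / 2 by rewrite divr_gt0.
have [N _ N_ok] : \forall n \near \oo,
    v n < v n.+1 /\ `|l - (u n.+1 - u n) / (v n.+1 - v n)| <= e / 2.
  by near=> n; split; near: n => //; move/cvgrPdist_le : ratio_l; apply.
have step n : (N <= n)%N ->
    `|u n.+1 - u n - l * (v n.+1 - v n)| <= e / 2 * (v n.+1 - v n).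
  move=> /N_ok[dv_gt0 dist]; rewrite -subr_gt0 in dv_gt0.
  rewrite -[u n.+1 - u n](divfK (lt0r_neq0 dv_gt0)) -mulrBl normrM.
  by rewrite (gtr0_norm dv_gt0) ler_pM2r // distrC.
have telescope k : `|u (N + k)%N - u N - l * (v (N + k)%N - v N)|
    <= e / 2 * (v (N + k)%N - v N).
  elim: k => [|k IH]; first by rewrite addn0 !subrr mulr0 subr0 normr0 mulr0.
  set m := (N + k)%N in IH *; rewrite addnS.
  have -> : u m.+1 - u N - l * (v m.+1 - v N) =
      (u m - u N - l * (v m - v N)) + (u m.+1 - u m - l * (v m.+1 - v m)) by ring.
  have -> : e / 2 * (v m.+1 - v N) = e / 2 * (v m - v N) + e / 2 * (v m.+1 - v m) by ring.
  exact: le_trans (ler_normD _ _) (lerD IH (step _ (leq_addr _ _))).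
near=> n.
have v_big : `|u N - l * v N| + e / 2 * `|v N| <= e / 2 * v n.
  by rewrite -ler_pdivrMl //; near: n; move/cvgryPge: vy; apply.
have v_gt0 : 0 < v n by near: n; move/cvgryPgt: vy; apply.
have := telescope (n - N)%N; rewrite subnKC; last by near: n; exact: nbhs_infty_ge.
move=> tel; rewrite -[l](mulfK (lt0r_neq0 v_gt0)) -mulrBl normrM normfV.
rewrite (gtr0_norm v_gt0) ler_pdivrMr // -normrN.
rewrite (_ : - _ = (u n - u N - l * (v n - v N)) + (u N - l * v N)); last by ring.
have := ler_normD (u n - u N - l * (v n - v N)) (u N - l * v N).
have := ler_norm (- v N); rewrite normrN; nra.
Unshelve. all: by end_near.
Qed.

End stolz_cesaro.

Section ln_sequences.
Context {R : realType}.

Lemma stolz_cesaro_ln (t : R ^nat) (l : R) :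
  (fun k => k%:R * (t k.+1 - t k)) @ \oo --> l ->
  (fun k => t k / ln k%:R) @ \oo --> l.
Proof.
move=> tl; apply: stolz_cesaro; first exact: lnn_cvgy.
  by near=> k; rewrite ltr_ln ?posrE ?ltr_nat // ltr0n; near: k; exact: nbhs_infty_gt.
have k_lnS : (fun k => k%:R * (ln k.+1%:R - ln k%:R)) @ \oo --> (1 : R).
  apply: (@squeeze_cvgr _ _ _ _ (fun k => 1 - harmonic k) (fun=> 1)); last 2 first.
  - by rewrite -[X in _ --> X]subr0; apply: cvgB; [exact: cvg_cst | exact: cvg_harmonic].
  - exact: cvg_cst.
  near=> k; have k_gt0 : 0 < k%:R :> R by rewrite ltr0n; near: k; exact: nbhs_infty_gt.
  have /andP[lo hi] := lnB_bounds k_gt0 (ltr0Sn R k).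
  have kS_sub_k : k.+1%:R - k%:R = 1 :> R by rewrite -natr1 addrAC subrr add0r.
  rewrite kS_sub_k !div1r in lo hi; apply/andP; split.
    rewrite (_ : 1 - k.+1%:R^-1 = k%:R / k.+1%:R).
      by apply: ler_wpM2l => //; exact: ltW.
    by rewrite -natr1; field; rewrite natr1 pnatr_eq0.
  rewrite -[X in _ <= X](mulfV (lt0r_neq0 k_gt0)).
  by apply: ler_wpM2l => //; exact: ltW.
have h : (fun k => k%:R * (t k.+1 - t k) / (k%:R * (ln k.+1%:R - ln k%:R)))
    @ \oo --> l * 1^-1.
  by apply: cvgM => //; exact: cvgV.
rewrite invr1 mulr1 in h; apply: cvg_trans h; apply: near_eq_cvg; near=> k.
have k_gt0 : 0 < k%:R :> R by rewrite ltr0n; near: k; exact: nbhs_infty_gt.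
have ln_gt : ln k%:R < ln k.+1%:R :> R by rewrite ltr_ln ?posrE ?ltr_nat.
by rewrite /= invfM mulrACA divff ?mul1r // ?lt0r_neq0 // subr_gt0.
Unshelve. all: by end_near.
Qed.

Lemma cvg_ln_affine_div_ln (a c : R) : 0 < a ->
  (fun k : nat => ln (a * k%:R + c) / ln k%:R) @ \oo --> (1 : R).
Proof.
move=> a0; have a_c : (fun k : nat => a + c * k%:R^-1) @ \oo --> a.
  rewrite -[X in _ --> X]addr0 -(mulr0 c); apply: cvgD; first exact: cvg_cst.
  by apply: cvgMr; exact: invn_cvg0.
have ln_k_gt0 : \forall k \near \oo, 0 < ln k%:R :> R.
  by near=> k; rewrite ln_gt0 // ltr1n; near: k; exact: nbhs_infty_gt.
have h : (fun k : nat => 1 + ln (a + c * k%:R^-1) / ln k%:R) @ \oo --> (1 : R).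
  rewrite -[X in _ --> X]addr0 -(mulr0 (ln a)); apply: cvgD; first exact: cvg_cst.
  apply: cvgM; first exact: cvg_comp a_c (continuous_ln a0).
  by apply/gtr0_cvgV0 => //; exact: lnn_cvgy.
apply: cvg_trans h; apply: near_eq_cvg; near=> k.
have k_gt0 : 0 < k%:R :> R by rewrite ltr0n; near: k; exact: nbhs_infty_gt.
have a_c_gt0 : 0 < a + c * k%:R^-1 by near: k; move/cvgr_gt: a_c; apply.
rewrite (_ : a * k%:R + c = k%:R * (a + c * k%:R^-1)); last by field; rewrite gt_eqF.
by rewrite lnM ?posrE // mulrDl divff // gt_eqF //; near: k.
Unshelve. all: by end_near.
Qed.

End ln_sequences.

Lemma ln_geometric_shift {R : realType} (sigma beta : R) : 0 < sigma -> 1 < beta ->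
  (fun k => ln (sigma * beta ^+ k - 1) - k%:R * ln beta) @ \oo --> ln sigma.
Proof.
move=> sigma_gt0 beta_gt1; have beta_gt0 : 0 < beta := lt_trans ltr01 beta_gt1.
have d : (fun k => sigma - beta^-1 ^+ k) @ \oo --> sigma.
  rewrite -[X in _ --> X]subr0; apply: cvgB; first exact: cvg_cst.
  by apply: cvg_expr; rewrite gtr0_norm ?invr_gt0 // invf_lt1.
apply: cvg_trans (cvg_comp _ _ d (continuous_ln sigma_gt0)); apply: near_eq_cvg.
near=> k; have d_gt0 : 0 < sigma - beta^-1 ^+ k by near: k; exact: cvgr_gt d _ sigma_gt0.
rewrite (_ : sigma * beta ^+ k - 1 = beta ^+ k * (sigma - beta^-1 ^+ k)); last first.
  by rewrite mulrBr exprVn divff ?expf_neq0 ?gt_eqF // mulrC.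
by rewrite /= lnM ?posrE ?exprn_gt0 // lnXn // mulr_natl addrAC subrr add0r.
Unshelve. all: by end_near.
Qed.

Section geometric_level.
Context {R : realType}.
Variables (level : R -> nat) (sigma beta : R).
Hypotheses (sigma_gt0 : 0 < sigma) (beta_gt1 : 1 < beta).
Hypothesis level_bounds : \forall x \near +oo,
  sigma * beta ^+ level x <= x <= sigma * beta ^+ (level x).+1.

Lemma level_cvg : level x @[x --> +oo] --> \oo.
Proof.
apply/cvgnyPge => M; near=> x; rewrite leqNgt; apply/negP => lt_level.
have /andP[_ x_hi] : sigma * beta ^+ level x <= x <= sigma * beta ^+ (level x).+1.
  by near: x.
have : sigma * beta ^+ M < x by near: x; apply: nbhs_pinfty_gt; rewrite num_real.
apply/negP; rewrite -leNgt; apply: le_trans x_hi _.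
by rewrite ler_pM2l // ler_eXn2l.
Unshelve. all: by end_near.
Qed.

Lemma ln_level_gt0 : \forall x \near +oo, 0 < ln (level x)%:R :> R.
Proof.
move/cvgnyPgt: level_cvg => /(_ 1%N); apply: filterS => x level_gt1.
by rewrite ln_gt0 // ltr1n.
Qed.

Lemma lnln_div_ln_level : (fun x => ln (ln x) / ln (level x)%:R) @ +oo --> (1 : R).
Proof.
have lnb_gt0 : 0 < ln beta by rewrite ln_gt0.
pose lo k : R := ln (ln beta * k%:R + ln sigma) / ln k%:R.
pose hi k : R := ln (ln beta * k%:R + (ln sigma + ln beta)) / ln k%:R.
apply: (@squeeze_cvgr _ _ _ _ (lo \o level) (hi \o level)); last 2 first.
- exact: cvg_comp level_cvg (cvg_ln_affine_div_ln _ lnb_gt0).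
- exact: cvg_comp level_cvg (cvg_ln_affine_div_ln _ lnb_gt0).
have geom_gt0 k : 0 < sigma * beta ^+ k.
  by rewrite mulr_gt0 // exprn_gt0 // (lt_trans ltr01).
have ln_geom k : ln (sigma * beta ^+ k) = ln sigma + k%:R * ln beta.
  by rewrite lnM ?posrE ?exprn_gt0 ?lnXn ?mulr_natl // (lt_trans ltr01).
have level_big : \forall x \near +oo, - ln sigma / ln beta < (level x)%:R.
  exact: level_cvg _ (nbhs_infty_gtr _).
near=> x.
have /andP[x_lo x_hi] : sigma * beta ^+ level x <= x <= sigma * beta ^+ (level x).+1.
  by near: x.
have x_gt0 : 0 < x := lt_le_trans (geom_gt0 _) x_lo.
have lnx_lo : ln sigma + (level x)%:R * ln beta <= ln x.
  by rewrite -ln_geom ler_ln ?posrE.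
have lnx_hi : ln x <= ln sigma + (level x).+1%:R * ln beta.
  by rewrite -ln_geom ler_ln ?posrE.
rewrite -natr1 mulrDl mul1r in lnx_hi.
have : - ln sigma / ln beta < (level x)%:R by near: x.
rewrite ltr_pdivrMr // => pos.
have ln_lvl : 0 < ln (level x)%:R :> R by near: x; exact: ln_level_gt0.
rewrite /lo /hi /= !ler_pM2r ?invr_gt0 //.
by rewrite !ler_ln ?posrE; lra.
Unshelve. all: by end_near.
Qed.

Lemma lnln_level_sandwich (t : R ^nat) (T : R -> R) (l : R) :
  (fun k => t k / ln k%:R) @ \oo --> l ->
  (\forall x \near +oo, t (level x) <= T x <= t (level x).+1) ->
  (fun x => T x / ln (ln x)) @ +oo --> l.
Proof.
move=> tl T_between.
have tSl : (fun k => t k.+1 / ln k%:R) @ \oo --> l.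
  have h : (fun k => t k.+1 / ln k.+1%:R * (ln (1 * k%:R + 1) / ln k%:R))
      @ \oo --> l * 1.
    apply: cvgM; last exact: cvg_ln_affine_div_ln.
    by rewrite (cvg_shiftS (fun k => t k / ln k%:R)).
  rewrite mulr1 in h; apply: cvg_trans h; apply: near_eq_cvg; near=> k.
  have k_gt1 : (1 < k)%N by near: k; exact: nbhs_infty_gt.
  by rewrite /= mul1r natr1 mulrA divfK // gt_eqF // ln_gt0 // ltr1n ltnW.
have T_ln_level : (fun x => T x / ln (level x)%:R) @ +oo --> l.
  apply: squeeze_cvgr (cvg_comp _ _ level_cvg tl) (cvg_comp _ _ level_cvg tSl).
  near=> x; have ln_lvl : 0 < ln (level x)%:R :> R by near: x; exact: ln_level_gt0.
  by rewrite /= !ler_pM2r ?invr_gt0 //; near: x.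
have h : (fun x => T x / ln (level x)%:R * (ln (ln x) / ln (level x)%:R)^-1)
    @ +oo --> l * 1^-1.
  by apply: cvgM => //; apply: cvgV => //; exact: lnln_div_ln_level.
rewrite invr1 mulr1 in h; apply: cvg_trans h; apply: near_eq_cvg; near=> x.
by rewrite /= invf_div mulrA divfK // gt_eqF //; near: x; exact: ln_level_gt0.
Unshelve. all: by end_near.
Qed.

End geometric_level.

Section ln_shifted_sequences.
Context {R : realType}.
Variables (lam : R) (w : R ^nat) (a : R).
Hypotheses (lam_gt0 : 0 < lam)
  (w_shift : (fun k => ln (w k) - k%:R * lam) @ \oo --> a).

Lemma nat_div_ln_shift : (fun k => k%:R / ln (w k)) @ \oo --> lam^-1.
Proof.
have h : (fun k => (lam + (ln (w k) - k%:R * lam) * k%:R^-1)^-1)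
    @ \oo --> (lam + a * 0)^-1.
  apply: cvgV; first by rewrite mulr0 addr0 gt_eqF.
  by apply: cvgD; [exact: cvg_cst | exact: cvgM w_shift invn_cvg0].
rewrite mulr0 addr0 in h; apply: cvg_trans h; apply: near_eq_cvg; near=> k.
have k_gt0 : 0 < k%:R :> R by rewrite ltr0n; near: k; exact: nbhs_infty_gt.
rewrite /= (_ : lam + _ = ln (w k) / k%:R) ?invf_div //.
by field; rewrite gt_eqF.
Unshelve. all: by end_near.
Qed.

Lemma ln_shift_cvgy : (fun k => ln (w k)) @ \oo --> +oo.
Proof.
apply/cvgryPge => M; near=> k.
have : a - 1 < ln (w k) - k%:R * lam by near: k; apply: (cvgr_gt _ w_shift); lra.
have : (M - a + 1) / lam < k%:R by near: k; exact: nbhs_infty_gtr.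
rewrite ltr_pdivrMr //; lra.
Unshelve. all: by end_near.
Qed.

Lemma shift_cvgy : w @ \oo --> +oo.
Proof.
apply/cvgryPge => M; near=> k.
have : Num.max M 1 <= ln (w k) by near: k; move/cvgryPge: ln_shift_cvgy; apply.
rewrite ge_max => /andP[M_le ln_ge1].
have w_gt0 : 0 < w k.
  by rewrite ltNge; apply/negP => /ln0 ln_w0; rewrite ln_w0 ler10 in ln_ge1.
exact: le_trans M_le (ltW (ln_sublinear w_gt0)).
Unshelve. all: by end_near.
Qed.

Lemma nat_mul_comp_cvg0 (g : R -> R) : g x * ln x @[x --> +oo] --> 0 ->
  (fun k => k%:R * g (w k)) @ \oo --> 0.
Proof.
move=> g_o.
have h : (fun k => g (w k) * ln (w k) * (k%:R / ln (w k))) @ \oo --> 0 * lam^-1.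
  exact: cvgM (cvg_comp _ _ shift_cvgy g_o) nat_div_ln_shift.
rewrite mul0r in h; apply: cvg_trans h; apply: near_eq_cvg; near=> k.
have ln_gt0 : 0 < ln (w k) by near: k; move/cvgryPgt: ln_shift_cvgy; apply.
by rewrite /=; field; rewrite gt_eqF.
Unshelve. all: by end_near.
Qed.

End ln_shifted_sequences.

Section lnln_increments.
Context {R : realType}.
Variables (lam a1 a2 : R) (u v : R ^nat).
Hypotheses (lam_gt0 : 0 < lam)
  (u_shift : (fun k => ln (u k) - k%:R * lam) @ \oo --> a1)
  (v_shift : (fun k => ln (v k) - k%:R * lam) @ \oo --> a2).

Lemma lnln_diff_cvg :
  (fun k => k%:R * (ln (ln (v k)) - ln (ln (u k)))) @ \oo --> (a2 - a1) / lam.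
Proof.
have d : (fun k => ln (v k) - ln (u k)) @ \oo --> a2 - a1.
  have -> : (fun k => ln (v k) - ln (u k)) =
      (fun k => (ln (v k) - k%:R * lam) - (ln (u k) - k%:R * lam)).
    by apply/funext => k; ring.
  exact: cvgB.
apply: (@squeeze_cvgr _ _ _ _
    (fun k => (ln (v k) - ln (u k)) * (k%:R / ln (v k)))
    (fun k => (ln (v k) - ln (u k)) * (k%:R / ln (u k)))); last 2 first.
- exact: cvgM d (nat_div_ln_shift lam_gt0 v_shift).
- exact: cvgM d (nat_div_ln_shift lam_gt0 u_shift).
near=> k.
have lnu_gt0 : 0 < ln (u k).
  by near: k; move/cvgryPgt: (ln_shift_cvgy lam_gt0 u_shift); apply.
have lnv_gt0 : 0 < ln (v k).
  by near: k; move/cvgryPgt: (ln_shift_cvgy lam_gt0 v_shift); apply.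
have /andP[lo hi] := lnB_bounds lnu_gt0 lnv_gt0.
rewrite !(mulrCA _ k%:R) /=; apply/andP; split; exact: ler_wpM2l.
Unshelve. all: by end_near.
Qed.

Lemma lnln_increment_cvg (F g : R -> R) (delta C : R) :
  g x * ln x @[x --> +oo] --> 0 ->
  (\forall x \near +oo, F x = delta * ln (ln x) + C + g x) ->
  (fun k => k%:R * (F (v k) - F (u k))) @ \oo --> delta * ((a2 - a1) / lam).
Proof.
move=> g_o F_asym.
have h : (fun k => delta * (k%:R * (ln (ln (v k)) - ln (ln (u k)))) +
    (k%:R * g (v k) - k%:R * g (u k))) @ \oo --> delta * ((a2 - a1) / lam) + (0 - 0).
  apply: cvgD; first exact: cvgMr lnln_diff_cvg.
  exact: cvgB (nat_mul_comp_cvg0 lam_gt0 v_shift g_o)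
    (nat_mul_comp_cvg0 lam_gt0 u_shift g_o).
rewrite subr0 addr0 in h; apply: cvg_trans h; apply: near_eq_cvg; near=> k.
have Fu : F (u k) = delta * ln (ln (u k)) + C + g (u k).
  by near: k; exact: (shift_cvgy lam_gt0 u_shift) _ F_asym.
have Fv : F (v k) = delta * ln (ln (v k)) + C + g (v k).
  by near: k; exact: (shift_cvgy lam_gt0 v_shift) _ F_asym.
by rewrite /= Fu Fv; ring.
Unshelve. all: by end_near.
Qed.

End lnln_increments.

Section leading_digits_density.
Context {R : realType}.
Variables (a : R ^nat) (b : nat) (s : seq nat) (delta C : R) (g : R -> R).
Hypotheses (a_ge0 : forall n, 0 <= a n) (b_gt1 : (1 < b)%N) (s_nil : s != [::])
  (s_digits : all (fun d => d < b)%N s) (s_head : nth 0%N s 0 != 0%N).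
Hypotheses (g_o : g x * ln x @[x --> +oo] --> 0)
  (partial_asym : \forall x \near +oo,
    \sum_(0 <= n < (Num.trunc x).+1) a n = delta * ln (ln x) + C + g x).

Local Notation S := (digits_value b s).
Let t k := \sum_(0 <= n < S * b ^ k | prefix s (digits b n)) a n.

Let le_prefix_sum m1 m2 : (m1 <= m2)%N ->
  \sum_(0 <= n < m1 | prefix s (digits b n)) a n <=
  \sum_(0 <= n < m2 | prefix s (digits b n)) a n.
Proof.
move=> m12; rewrite (big_cat_nat (leq0n _) m12) /= lerDl.
by apply: sumr_ge0 => n _.
Qed.

Let S_gt0 : (0 < S)%N := digits_value_gt0 b_gt1 s_nil s_digits s_head.

Lemma prefix_block_sum k :
  t k.+1 - t k = \sum_(S * b ^ k <= n < S.+1 * b ^ k) a n.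
Proof.
have block_le : (S * b ^ k <= S * b ^ k.+1)%N.
  by rewrite leq_pmul2l // leq_pexp2l ?(ltnW b_gt1).
rewrite /t (big_cat_nat (leq0n _) block_le) /= addrC addrK.
have le_mid : (S.+1 * b ^ k <= S * b ^ k.+1)%N.
  by rewrite expnSr; have := expn_gt0 b k; nia.
rewrite (big_nat_widen _ _ _ _ _ le_mid) big_nat_cond [RHS]big_nat_cond.
apply: eq_bigl => n; case: (boolP (S * b ^ k <= n < S * b ^ k.+1)%N) => //= window.
by rewrite (prefix_digits_window b_gt1 s_nil s_digits s_head window).
Qed.

Lemma partial_sum_natE n : (0 < n)%N ->
  \sum_(0 <= m < (Num.trunc (n%:R - 1 : R)).+1) a m = \sum_(0 <= m < n) a m.
Proof.
move=> n_gt0; rewrite -[in n%:R](prednK n_gt0) -natr1 addrK.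
have -> : Num.trunc (n.-1%:R : R) = n.-1 by apply: truncn_def; rewrite lexx ltr_nat /=.
by rewrite prednK.
Qed.

Lemma block_increment_cvg :
  (fun k => k%:R * (t k.+1 - t k)) @ \oo --> delta * (ln (1 + S%:R^-1) / ln b%:R).
Proof.
pose F (x : R) := \sum_(0 <= n < (Num.trunc x).+1) a n.
pose u k : R := (S * b ^ k)%:R - 1.
pose v k : R := (S.+1 * b ^ k)%:R - 1.
have b_gt1R : 1 < b%:R :> R by rewrite ltr1n.
have S_gt0R : 0 < S%:R :> R by rewrite ltr0n.
have incr_t k : t k.+1 - t k = F (v k) - F (u k).
  have bk_gt0 : (0 < b ^ k)%N by rewrite expn_gt0 ltnW.
  rewrite prefix_block_sum /F /u /v !partial_sum_natE ?muln_gt0 ?S_gt0 //.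
  have S_le : (S * b ^ k <= S.+1 * b ^ k)%N by rewrite leq_mul2r leqnSn orbT.
  by rewrite (big_cat_nat (leq0n _) S_le) /= addrAC subrr add0r.
have -> : (fun k => k%:R * (t k.+1 - t k)) = (fun k => k%:R * (F (v k) - F (u k))).
  by apply/funext => k; rewrite incr_t.
have -> : ln (1 + S%:R^-1) = ln S.+1%:R - ln S%:R :> R.
  by rewrite -ln_div ?posrE ?ltr0n // -natr1 mulrDl divff ?mul1r ?gt_eqF.
apply: lnln_increment_cvg g_o partial_asym.
- exact: ln_gt0.
- by rewrite /u; under eq_fun do rewrite natrM natrX; exact: ln_geometric_shift.
- rewrite /v; under eq_fun do rewrite natrM natrX.
  by apply: ln_geometric_shift; rewrite ?ltr0n.
Qed.

Theorem leading_digits_lnln_density :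
  (fun x => (\sum_(0 <= n < (Num.trunc x).+1 | prefix s (digits b n)) a n) / ln (ln x))
    @ +oo --> delta * (ln (1 + S%:R^-1) / ln b%:R).
Proof.
pose level (x : R) := trunc_log b (Num.trunc x %/ S).
have level_spec : \forall x \near +oo,
    (S * b ^ level x <= Num.trunc x < S * b ^ (level x).+1)%N.
  near=> x; have S_le : (S <= Num.trunc x)%N.
    rewrite truncn_ge_nat; last by near: x; apply: nbhs_pinfty_ge.
    by near: x; apply: nbhs_pinfty_ge.
  have quot_gt0 : (0 < Num.trunc x %/ S)%N by rewrite divn_gt0.
  have /andP[lo hi] := trunc_log_bounds b_gt1 quot_gt0.
  apply/andP; split; last by rewrite mulnC -ltn_divLR.
  by apply: leq_trans (leq_trunc_div _ S); rewrite mulnC leq_mul2r lo orbT.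
apply: (@lnln_level_sandwich _ level S%:R b%:R); rewrite ?ltr0n ?ltr1n //.
- near=> x; have /andP[lo hi] :
      (S * b ^ level x <= Num.trunc x < S * b ^ (level x).+1)%N by near: x.
  have x_ge0 : 0 <= x by near: x; apply: nbhs_pinfty_ge.
  have /andP[tr_le tr_lt] := truncn_itv x_ge0.
  rewrite -!natrX -!natrM; apply/andP; split.
    by apply: le_trans tr_le; rewrite ler_nat.
  by apply: ltW (lt_le_trans tr_lt _); rewrite ler_nat.
- exact: stolz_cesaro_ln block_increment_cvg.
- near=> x; have /andP[lo hi] :
      (S * b ^ level x <= Num.trunc x < S * b ^ (level x).+1)%N by near: x.
  by apply/andP; split; apply: le_prefix_sum => //; apply: leq_trans lo _.
Unshelve. all: by end_near.
Qed.

End leading_digits_density.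

Section limf_esup_einf_cvg.
Context {R : realType} (F : set_system R) {PF : ProperFilter F}.
Variables (h : R -> \bar R) (f : R -> R) (l : R).
Hypotheses (hf : \forall x \near F, h x = (f x)%:E) (fl : f @ F --> l).

Let near_l e : 0 < e -> \forall x \near F, h x = (f x)%:E /\ l - e <= f x <= l + e.
Proof.
move=> e0; move/cvgrPdist_le: fl => /(_ e e0) near_fl.
by near=> x; split; [near: x | rewrite -ler_distlC; near: x].
Unshelve. all: by end_near.
Qed.

Lemma limf_esup_cvg : limf_esup h F = l%:E.
Proof.
apply/eqP; rewrite eq_le; apply/andP; split; apply/lee_addgt0Pr => e e0.
  pose V := [set x | h x = (f x)%:E /\ l - e <= f x <= l + e].
  apply: (@le_trans _ _ (ereal_sup (h @` V))).
    by apply: ereal_inf_lbound; exists V => //; apply: near_l.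
  by apply: ge_ereal_sup => _ [x [-> /andP[_ fx]] <-]; rewrite lee_fin.
rewrite -leeBlDr //; apply: le_ereal_inf_tmp => _ [V FV <-].
have [y [Vy [hy /andP[fy _]]]] := filter_ex (filterI FV (near_l e0)).
apply: (@le_trans _ _ (h y)); last by apply: ereal_sup_ubound; exists y.
by rewrite hy lee_fin.
Qed.

End limf_esup_einf_cvg.

Lemma limf_einf_cvg {R : realType} (F : set_system R) {PF : ProperFilter F}
    (h : R -> \bar R) (f : R -> R) (l : R) :
  (\forall x \near F, h x = (f x)%:E) -> f @ F --> l -> limf_einf h F = l%:E.
Proof.
move=> hf fl; rewrite /limf_einf (@limf_esup_cvg _ _ _ _ (- f) (- l)) ?EFinN ?oppeK //.
- by apply: filterS hf => x /= ->.
- exact: cvgN.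
Qed.

Section norm_mass.
Context {R : realType} {K : fieldExtType rat}.
Implicit Types (A B : set (set K)) (x : R).
Local Open Scope ereal_scope.

Definition norm_mass B (n : nat) : \bar R :=
  \esum_(p in [set p | B p /\ absnorm p = n]) ((absnorm p)%:R^-1)%:E.

Lemma norm_mass_ge0 B n : 0 <= norm_mass B n.
Proof. by apply: esum_ge0 => p _; rewrite lee_fin invr_ge0. Qed.

Lemma recip_norm_sumE B x : (0 <= x)%R ->
  recip_norm_sum B x = \sum_(0 <= n < (Num.trunc x).+1) norm_mass B n.
Proof.
move=> x0; have /andP[le_x lt_x] := truncn_itv x0; rewrite /recip_norm_sum.
have -> : [set p | B p /\ (absnorm p)%:R <= x]%R =
    \bigcup_(n in `I_(Num.trunc x).+1) [set p | B p /\ absnorm p = n].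
  apply/seteqP; split => p /=.
    move=> [Bp le_px]; exists (absnorm p) => //=.
    by rewrite -(ltr_nat R); apply: le_lt_trans lt_x.
  move=> [n /= lt_n [Bp pn]]; split => //; rewrite pn.
  by apply: le_trans le_x; rewrite ler_nat -ltnS.
rewrite esum_bigcupT.
- rewrite esum_fset; first by rewrite -fsbig_ord big_mkord.
  + exact: finite_II.
  + by move=> n _; exact: norm_mass_ge0.
- by move=> i j _ _ [p [[_ <-] [_ <-]]].
- by move=> p; rewrite lee_fin invr_ge0.
Qed.

Lemma norm_mass_fin_num B :
  (\forall x \near (+oo%R : set_system R), recip_norm_sum B x \is a fin_num) ->
  forall n, norm_mass B n \is a fin_num.
Proof.
move=> B_fin n; rewrite ge0_fin_numE ?norm_mass_ge0 //.
have : \forall x \near (+oo%R : set_system R),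
    [/\ (0 <= x)%R, (n%:R <= x)%R & recip_norm_sum B x \is a fin_num].
  by near=> x; split; near: x => //; apply: nbhs_pinfty_ge.
case/filter_ex => x [x_ge0 x_ge_n fin_x].
apply: le_lt_trans (_ : recip_norm_sum B x < +oo); last by rewrite ltey_eq fin_x.
rewrite recip_norm_sumE // (big_cat_nat (n := n.+1)) //=; last first.
  by rewrite ltnS truncn_ge_nat.
rewrite big_nat_recr //= -addrA addrC.
by do 2![apply: lee_paddr; first by apply: sume_ge0 => m _; exact: norm_mass_ge0].
Unshelve. all: by end_near.
Qed.

Lemma recip_norm_sum_leading_digits A b s x : (0 <= x)%R ->
  recip_norm_sum (leading_digits_set A b s) x =
  \sum_(0 <= n < (Num.trunc x).+1 | prefix s (digits b n)) norm_mass A n.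
Proof.
move=> x0; rewrite recip_norm_sumE // [RHS]big_mkcond /=; apply: eq_bigr => n _.
case: ifP => pre; rewrite /norm_mass /leading_digits_set.
  by congr esum; apply/seteqP; split => p /= [] => [[Ap _] //|Ap pn]; rewrite pn.
rewrite -(esum_set0 (fun p : set K => ((absnorm p)%:R^-1)%:E)); congr esum.
by apply/seteqP; split => p // [[_ pre_p] n_p]; rewrite -n_p pre_p in pre.
Qed.

End norm_mass.
Arguments norm_mass R {K} B n.

Theorem theorem1p1 (R : realType) (K : fieldExtType rat) (A : set (set K))
  (delta C : R) (b : nat) (s : seq nat) :
  A `<=` primes_of K ->
  0 <= delta ->
  (exists g : R -> R,
      (g x * ln x @[x --> +oo%R] --> 0%R) /\
      \forall x \near (+oo : set_system R),
        recip_norm_sum A x = (delta * ln (ln x) + C + g x)%:E) ->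
  (2 <= b)%N ->
  (1 <= size s)%N ->
  all (fun a => a < b)%N s ->
  nth 0%N s 0 != 0%N ->
  has_logdensity (leading_digits_set A b s)
    (delta * (ln (1 + ((digits_value b s)%:R)^-1) / ln b%:R)).
Proof.
move=> _ _ [g [g_o A_asym]] b_gt1 s_size s_digits s_head.
have s_nil : s != [::] by case: s s_size {s_digits s_head}.
have mass_fin : forall n, norm_mass R A n \is a fin_num.
  by apply: norm_mass_fin_num; apply: filterS A_asym => x ->.
pose a n := fine (norm_mass R A n).
have massE n : norm_mass R A n = (a n)%:E by rewrite fineK.
have a_ge0 n : 0 <= a n by rewrite fine_ge0 // norm_mass_ge0.
have partial_asym : \forall x \near +oo,
    \sum_(0 <= n < (Num.trunc x).+1) a n = delta * ln (ln x) + C + g x.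
  near=> x; have x_ge0 : 0 <= x by near: x; apply: nbhs_pinfty_ge.
  apply: EFin_inj; rewrite -sumEFin; under eq_bigr do rewrite -massE.
  by rewrite -recip_norm_sumE //; near: x.
have lead_E : \forall x \near +oo,
    (recip_norm_sum (leading_digits_set A b s) x * ((ln (ln x))^-1)%:E)%E =
    ((\sum_(0 <= n < (Num.trunc x).+1 | prefix s (digits b n)) a n) / ln (ln x))%:E.
  near=> x; have x_ge0 : 0 <= x by near: x; apply: nbhs_pinfty_ge.
  rewrite recip_norm_sum_leading_digits // EFinM -sumEFin.
  by under [in RHS]eq_bigr do rewrite -massE.
have T_cvg :=
  leading_digits_lnln_density a_ge0 b_gt1 s_nil s_digits s_head g_o partial_asym.
by split; [exact: limf_esup_cvg lead_E T_cvg | exact: limf_einf_cvg lead_E T_cvg].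
Unshelve. all: by end_near.
Qed.
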